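(* Let $\mathcal{T}=(X,\mathcal{B},\mathcal{G})$ be a $\mathrm{TD}_\lambda(\ell,s)$ and let $q=p^e$ with $p$ prime. If $p\nmid \lambda s$, then $$\mathrm{Code}_q(\mathcal{T})\subseteq\{c\in\mathbb{F}_q^{X}:\ \text{for every } G\in\mathcal{G},\ c_{|G}\in\mathrm{Rep}(s)\},$$ where $\mathrm{Rep}(s)$ is the repetition code of length $s$ (i.e. $c$ is constant on each group). In particular, if $p\nmid\lambda s$ then $\dim_{\mathbb{F}_q}\mathrm{Code}_q(\mathcal{T})\le\ell$.
   Context: A transversal design $\mathrm{TD}_\lambda(\ell,s)$ ($s,\ell\ge2$, $\lambda\ge1$) is a triple $(X,\mathcal{B},\mathcal{G})$ where $X$ is a finite set of points, $\mathcal{B}$ a collection of subsets of $X$ (blocks), and $\mathcal{G}=\{G_1,\dots,G_\ell\}$ a partition of $X$ (groups) such that $|X|=\ell s$, every group has size $s$, every block has size $\ell$, and every unordered pair of distinct points of $X$ is contained either in one group and no block, or in no group and exactly $\lambda$ blocks. For a block design $(X,\mathcal{B})$, $\mathrm{Code}_q$ of the design is the $\mathbb{F}_q$-linear code $\{c\in\mathbb{F}_q^X:\ \sum_{x\in B}c_x=0\ \forall B\in\mathcal{B}\}$. For $c\in\mathbb{F}_q^X$ and $T\subseteq X$, $c_{|T}=(c_t)_{t\in T}$. *)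

From HB Require Import structures.
From mathcomp Require Import all_boot all_order all_algebra all_field.
Set Implicit Arguments. Unset Strict Implicit. Unset Printing Implicit Defensive.
Import GRing.Theory.
Local Open Scope ring_scope.

(* A transversal design TD_lam(l, s) on the finite point set X:
   blocks B is a collection (list, repetitions allowed) of subsets of X,
   groups G is a set of subsets of X forming a partition of X. *)
Definition is_TD (X : finType) (lam l s : nat)
    (B : seq {set X}) (G : {set {set X}}) : Prop :=
  [/\ (2 <= s)%N /\ (2 <= l)%N /\ (1 <= lam)%N,
      partition G [set: X] /\ #|G| = l,
      #|X| = (l * s)%N /\ (forall g, g \in G -> #|g| = s),
      (forall b, b \in B -> #|b| = l) &
      (forall x y : X, x != y ->
         if [exists g in G, (x \in g) && (y \in g)]
         then count (fun b : {set X} => (x \in b) && (y \in b)) B = 0%N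
         else count (fun b : {set X} => (x \in b) && (y \in b)) B = lam)].

Definition block_sums (F : fieldType) (X : finType) (B : seq {set X})
    (c : {ffun X -> F^o}) : {ffun 'I_(size B) -> F^o} :=
  [ffun i : 'I_(size B) => \sum_(x in nth set0 B i) c x].

Definition design_code (F : fieldType) (X : finType) (B : seq {set X})
    : {vspace {ffun X -> F^o}} :=
  lker (linfun (block_sums (F:=F) B)).

(* Fix a point x in the group g and a codeword c.  Summing the block equations
   over the r_x blocks through x counts c_x once per block and every z outside
   g exactly lambda times, while points of g other than x never occur:
   0 = r_x c_x + lambda * sum_{z not in g} c_z.  Double counting the pairs
   (x, z) gives r_x = lambda s, so lambda s c_x does not depend on x in g; as p
   does not divide lambda s, c is constant on g. *)
From HB Require Import structures.
From mathcomp Require Import all_boot all_order all_algebra all_field.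
From mathcomp Require Import zify.
Set Implicit Arguments. Unset Strict Implicit. Unset Printing Implicit Defensive.
Import GRing.Theory.
Local Open Scope ring_scope.

Section DesignCode.
Variables (F : fieldType) (X : finType) (B : seq {set X}).

Fact block_sums_is_linear : linear (block_sums (F:=F) B).
Proof.
move=> a u v; apply/ffunP => i; rewrite !ffunE scaler_sumr -big_split.
by apply: eq_bigr => x _; rewrite !ffunE.
Qed.
HB.instance Definition _ := GRing.isLinear.Build F _ _ _ (block_sums (F:=F) B)
  block_sums_is_linear.

Lemma design_code_block_sum c b :
  c \in design_code F B -> b \in B -> \sum_(x in b) c x = 0.
Proof.
rewrite memv_ker lfunE => /eqP c0 bB.
have iB : (index b B < size B)%N by rewrite index_mem.
have := congr1 (fun f : {ffun 'I_(size B) -> F^o} => f (Ordinal iB)) c0.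
by rewrite /= !ffunE nth_index.
Qed.

End DesignCode.

Definition replication (X : finType) (B : seq {set X}) (x : X) : nat :=
  count (fun b : {set X} => x \in b) B.

Definition pair_count (X : finType) (B : seq {set X}) (x z : X) : nat :=
  count (fun b : {set X} => (x \in b) && (z \in b)) B.

Lemma sum_blocks_through (V : nmodType) (X : finType) (B : seq {set X})
    (x : X) (f : X -> V) :
  \sum_(b <- B | x \in b) \sum_(z in b) f z = \sum_z f z *+ pair_count B x z.
Proof.
elim: B => [|b B IH]; first by rewrite big_nil big1 // => z _; rewrite mulr0n.
rewrite big_cons IH /pair_count.
under [RHS]eq_bigr => z _ do rewrite /= mulrnDr.
rewrite big_split /=; case: (x \in b) => /=; last first.
  by rewrite [in RHS]big1 ?add0r // => z _; rewrite mulr0n.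
by congr (_ + _); rewrite big_mkcond; apply: eq_bigr => z _; case: (z \in b).
Qed.

Section TransversalDesign.
Variables (X : finType) (lam l s : nat) (B : seq {set X}) (G : {set {set X}}).
Hypothesis tdT : is_TD lam l s B G.

Lemma pair_count_TD g x z : g \in G -> x \in g ->
  pair_count B x z =
  ((if z == x then replication B x else 0) + (if z \in g then 0 else lam))%N.
Proof.
case: tdT => _ [/and3P [_ trivG _] _] _ _ pairs gG xg; rewrite /pair_count.
have [->|zx] := eqVneq z x.
  by rewrite xg addn0; apply: eq_count => b; rewrite andbb.
have := pairs x z; rewrite eq_sym zx => /(_ isT).
case: existsP => [[g' /and3P [g'G xg' zg']] | noG] ->.
  by rewrite -(def_pblock trivG gG xg) (def_pblock trivG g'G xg') zg'.
by case: ifP => // zg; case: noG; exists g; rewrite gG xg zg.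
Qed.

Lemma sum_pair_count_TD (V : nmodType) (f : X -> V) g x : g \in G -> x \in g ->
  \sum_z f z *+ pair_count B x z =
  f x *+ replication B x + \sum_(z in ~: g) f z *+ lam.
Proof.
move=> gG xg; under eq_bigr => z _ do rewrite (pair_count_TD z gG xg) mulrnDr.
rewrite big_split /= (bigD1 x) //= eqxx big1 ?addr0 => [|z /negbTE->]; last first.
  by rewrite mulr0n.
congr (_ + _); rewrite [RHS]big_mkcond; apply: eq_bigr => z _.
by rewrite in_setC; case: (z \in g).
Qed.

(* Double counting the pairs (x, z) in a common block: r_x l = r_x + lambda (l s - s). *)
Lemma replication_TD x : replication B x = (lam * s)%N.
Proof.
case: tdT => [[_ [l2 _]] [/and3P [/eqP covG trivG _] _] [cardX cardg] cardB _].
have xG : x \in cover G by rewrite covG inE.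
have gG := pblock_mem xG; have xg : x \in pblock G x by rewrite mem_pblock.
have := sum_blocks_through B x (fun=> 1%N).
rewrite (sum_pair_count_TD _ gG xg) natn.
under eq_bigr => b /= _ do rewrite sum1_card.
under [X in _ = (_ + X)%N]eq_bigr => z _ do rewrite natn.
rewrite big_seq_cond (eq_bigr (fun=> l)) => [|b /andP [/cardB //]].
rewrite -big_seq_cond big_const_seq iter_addn_0 -/(replication B x) sum_nat_const.
have := cardsC (pblock G x); rewrite cardg // cardX.
by nia.
Qed.

Lemma design_code_const_on_groups (F : fieldType) (c : {ffun X -> F^o}) :
  (lam * s)%:R != 0 :> F -> c \in design_code F B ->
  forall g, g \in G -> forall x y, x \in g -> y \in g -> c x = c y.
Proof.
move=> ls0 cC g gG.
have block_eq x : x \in g ->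
    c x *+ (lam * s) + \sum_(z in ~: g) c z *+ lam = 0.
  move=> xg; rewrite -(replication_TD x) -(sum_pair_count_TD _ gG xg).
  rewrite -sum_blocks_through big1_seq // => b /andP [_ bB].
  exact: design_code_block_sum cC bB.
move=> x y xg yg.
have : c x *+ (lam * s) = c y *+ (lam * s).
  apply: (addIr (\sum_(z in ~: g) c z *+ lam)).
  by rewrite (block_eq x xg) (block_eq y yg).
by rewrite -[c x *+ _]mulr_natr -[c y *+ _]mulr_natr => /(mulIf ls0).
Qed.

End TransversalDesign.

Lemma dimv_const_on_partition (K : fieldType) (X : finType) (P : {set {set X}})
    (U : {vspace {ffun X -> K^o}}) :
  partition P [set: X] ->
  (forall c, c \in U -> forall g, g \in P -> forall x y, x \in g -> y \in g ->
     c x = c y) ->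
  (\dim U <= #|P|)%N.
Proof.
case/and3P => /eqP covP trivP _ constU.
pose ind (g : {set X}) : {ffun X -> K^o} := [ffun z => if z \in g then 1 else 0].
pose vs := [seq ind g | g <- enum P].
have UsubP : (U <= <<vs>>)%VS.
  apply/subvP => c cU.
  pose coef (g : {set X}) : K^o := if [pick z in g] is Some z then c z else 0.
  have -> : c = \sum_(g in P) coef g *: ind g.
    apply/ffunP => z; rewrite sum_ffunE.
    have zP : z \in cover P by rewrite covP inE.
    have zg : z \in pblock P z by rewrite mem_pblock.
    rewrite (bigD1 (pblock P z)) ?pblock_mem //= big1 => [|g /andP [gP ng]].
      rewrite !ffunE zg addr0 /coef /GRing.scale /= mulr1.
      case: pickP => [z' z'g | /(_ z)]; last by rewrite zg.
      exact: (constU c cU _ (pblock_mem zP)).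
    rewrite !ffunE; case: ifP => zg'; last by rewrite scaler0.
    by rewrite -(def_pblock trivP gP zg') eqxx in ng.
  apply: memv_suml => g gP; apply/memvZ/memv_span/map_f.
  by rewrite mem_enum.
rewrite (leq_trans (dimvS UsubP)) // (leq_trans (dim_span vs)) //.
by rewrite size_map -cardE.
Qed.

Theorem mainTheorem2 (X : finType) (lam l s : nat)
    (B : seq {set X}) (G : {set {set X}})
    (F : finFieldType) (p e : nat) :
  is_TD lam l s B G ->
  prime p -> #|F| = (p ^ e)%N ->
  ~~ (p %| lam * s)%N ->
  (forall c : {ffun X -> F^o},
     c \in design_code F B ->
     forall g, g \in G -> forall x y, x \in g -> y \in g -> c x = c y)
  /\ (\dim (design_code F B) <= l)%N.
Proof.
move=> tdT p_pr cardF p_ndvd.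
have charF : p \in [pchar F] := card_finPcharP cardF p_pr.
have ls0 : (lam * s)%:R != 0 :> F by rewrite -(dvdn_pcharf charF).
have constC := design_code_const_on_groups tdT ls0.
split=> //; case: (tdT) => _ [partG <-] _ _ _.
by apply: dimv_const_on_partition.
Qed.
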